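(* Let $E$ be a graph, $K$ a field with involution, $R$ an involutive $K$-algebra, and $t$ a canonical, $K$-linear, $R$-valued trace on $L_K(E)$. Then $t$ is positive if and only if (P) $t\big(v-\sum_{e\in I}\mathbf{r}(e)\big)\ge 0$ for every vertex $v$ and every finite subset $I\subseteq\mathbf{s}^{-1}(v)$.
   Context: A (directed) graph $E=(E^0,E^1,\mathbf{s},\mathbf{r})$ has vertex set $E^0$, edge set $E^1$, source and range maps; no finiteness or countability is assumed. A path is a vertex $v$ (length $0$, $\mathbf{s}(v)=\mathbf{r}(v)=v$) or a sequence $p=e_1\cdots e_n$ of edges with $\mathbf{r}(e_i)=\mathbf{s}(e_{i+1})$, $\mathbf{s}(p)=\mathbf{s}(e_1)$, $\mathbf{r}(p)=\mathbf{r}(e_n)$. A vertex $v$ is regular if $\mathbf{s}^{-1}(v)$ is nonempty and finite. $K$ is a field with an arbitrary involution $a\mapsto a^*$ (possibly the identity). $L_K(E)$ is the free $K$-algebra generated by $E^0\cup E^1\cup\{e^*:e\in E^1\}$ subject to (V) $vw=\delta_{v,w}v$; (E1) $\mathbf{s}(e)e=e\mathbf{r}(e)=e$; (E2) $\mathbf{r}(e)e^*=e^*\mathbf{s}(e)=e^*$; (CK1) $e^*f=\delta_{e,f}\mathbf{r}(e)$; (CK2) $v=\sum_{e\in\mathbf{s}^{-1}(v)}ee^*$ for regular $v$; with $p^*=e_n^*\cdots e_1^*$, $v^*=v$, it is an involutive $K$-algebra via $(\sum a_ip_iq_i^* )^*=\sum a_i^*q_ip_i^*$. An involutive $K$-algebra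 is a $K$-algebra with an involution (additive, $(xy)^*=y^*x^*$, $x^{**}=x$) such that $(ax)^*=a^*x^*$ for $a\in K$. An element $x$ is positive, $x\ge0$, if it is a finite sum of elements $zz^*$; $x\ge y$ means $x-y\ge 0$. A trace is an additive map with $t(xy)=t(yx)$; $K$-linear means $t(ax)=at(x)$; $t$ is positive if $x\ge0$ implies $t(x)\ge0$. A trace $t$ on $L_K(E)$ is canonical if $t(pq^* )=\delta_{p,q}\,t(\mathbf{r}(p))$ for all paths $p,q$ with $\mathbf{r}(p)=\mathbf{r}(q)$. *)

(* Leavitt path algebras over arbitrary graphs, presented
   literally as "free (non-unital) K-algebra on the generators modulo the
   relations": terms over the generators modulo the congruence generated by
   the K-algebra axioms and the relations (V),(E1),(E2),(CK1),(CK2). *)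
From HB Require Import structures.
From mathcomp Require Import all_boot all_algebra.
From Stdlib Require List.
Set Implicit Arguments. Unset Strict Implicit. Unset Printing Implicit Defensive.
Import GRing.Theory.
Local Open Scope ring_scope.

Record graph := Graph {
  vert : Type; edge : Type; gsrc : edge -> vert; grng : edge -> vert }.

Definition field_involution (K : fieldType) (ks : K -> K) : Prop :=
  (forall a b, ks (a + b) = ks a + ks b) /\
  (forall a b, ks (a * b) = ks a * ks b) /\
  (forall a, ks (ks a) = a).

Record invAlg (K : fieldType) (ks : K -> K) := InvAlg {
  ia_sort :> lmodType K;
  ia_mul : ia_sort -> ia_sort -> ia_sort;
  ia_star : ia_sort -> ia_sort;
  ia_mulA : forall x y z, ia_mul x (ia_mul y z) = ia_mul (ia_mul x y) z;
  ia_mulDl : forall x y z, ia_mul (x + y) z = ia_mul x z + ia_mul y z;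
  ia_mulDr : forall x y z, ia_mul x (y + z) = ia_mul x y + ia_mul x z;
  ia_mulZl : forall (a : K) x y, ia_mul (a *: x) y = a *: ia_mul x y;
  ia_mulZr : forall (a : K) x y, ia_mul x (a *: y) = a *: ia_mul x y;
  ia_starD : forall x y, ia_star (x + y) = ia_star x + ia_star y;
  ia_starM : forall x y, ia_star (ia_mul x y) = ia_mul (ia_star y) (ia_star x);
  ia_starK : forall x, ia_star (ia_star x) = x;
  ia_starZ : forall (a : K) x, ia_star (a *: x) = ks a *: ia_star x }.

Definition nonneg (K : fieldType) (ks : K -> K) (R : invAlg ks) (x : R) : Prop :=
  exists zs : seq R, x = \sum_(z <- zs) ia_mul z (ia_star z).

Section Leavitt.
Variables (K : fieldType) (E : graph).

Inductive lterm : Type :=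
  | LV (v : vert E)
  | LE (e : edge E)
  | LG (e : edge E)          (* ghost edge e^* *)
  | LZero
  | LAdd (x y : lterm)
  | LMul (x y : lterm)
  | LScale (a : K) (x : lterm).

Definition lsum (xs : seq lterm) : lterm := foldr LAdd LZero xs.

(* l is a duplicate-free nonempty enumeration of s^{-1}(v); such l exists
   iff v is regular *)
Definition src_enum (v : vert E) (l : seq (edge E)) : Prop :=
  l <> [::] /\ List.NoDup l /\ (forall e, gsrc e = v <-> List.In e l).

Inductive leqv : lterm -> lterm -> Prop :=
  | leqv_refl x : leqv x x
  | leqv_sym x y : leqv x y -> leqv y x
  | leqv_trans x y z : leqv x y -> leqv y z -> leqv x z
  | leqv_add x x' y y' : leqv x x' -> leqv y y' -> leqv (LAdd x y) (LAdd x' y')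
  | leqv_mul x x' y y' : leqv x x' -> leqv y y' -> leqv (LMul x y) (LMul x' y')
  | leqv_scale a x x' : leqv x x' -> leqv (LScale a x) (LScale a x')
  | ax_addC x y : leqv (LAdd x y) (LAdd y x)
  | ax_addA x y z : leqv (LAdd (LAdd x y) z) (LAdd x (LAdd y z))
  | ax_add0 x : leqv (LAdd x LZero) x
  | ax_addN x : leqv (LAdd x (LScale (-1) x)) LZero
  | ax_scaleDr a x y : leqv (LScale a (LAdd x y)) (LAdd (LScale a x) (LScale a y))
  | ax_scaleDl a b x : leqv (LScale (a + b) x) (LAdd (LScale a x) (LScale b x))
  | ax_scaleA a b x : leqv (LScale a (LScale b x)) (LScale (a * b) x)
  | ax_scale1 x : leqv (LScale 1 x) x
  | ax_mulA x y z : leqv (LMul (LMul x y) z) (LMul x (LMul y z))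
  | ax_mulDr x y z : leqv (LMul x (LAdd y z)) (LAdd (LMul x y) (LMul x z))
  | ax_mulDl x y z : leqv (LMul (LAdd x y) z) (LAdd (LMul x z) (LMul y z))
  | ax_scaleMl a x y : leqv (LScale a (LMul x y)) (LMul (LScale a x) y)
  | ax_scaleMr a x y : leqv (LScale a (LMul x y)) (LMul x (LScale a y))
  | rel_V1 v : leqv (LMul (LV v) (LV v)) (LV v)
  | rel_V0 v w : v <> w -> leqv (LMul (LV v) (LV w)) LZero
  | rel_E1s e : leqv (LMul (LV (gsrc e)) (LE e)) (LE e)
  | rel_E1r e : leqv (LMul (LE e) (LV (grng e))) (LE e)
  | rel_E2r e : leqv (LMul (LV (grng e)) (LG e)) (LG e)
  | rel_E2s e : leqv (LMul (LG e) (LV (gsrc e))) (LG e)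
  | rel_CK1 e : leqv (LMul (LG e) (LE e)) (LV (grng e))
  | rel_CK1' e f : e <> f -> leqv (LMul (LG e) (LE f)) LZero
  | rel_CK2 v l : src_enum v l ->
      leqv (LV v) (lsum [seq LMul (LE e) (LG e) | e <- l]).

Fixpoint lstar (ks : K -> K) (x : lterm) : lterm :=
  match x with
  | LV v => LV v
  | LE e => LG e
  | LG e => LE e
  | LZero => LZero
  | LAdd x y => LAdd (lstar ks x) (lstar ks y)
  | LMul x y => LMul (lstar ks y) (lstar ks x)
  | LScale a x => LScale (ks a) (lstar ks x)
  end.

Inductive gpath : Type :=
  | PVert (v : vert E)
  | PEdges (e : edge E) (es : seq (edge E)).

Fixpoint echain (e : edge E) (es : seq (edge E)) : Prop :=
  match es with
  | [::] => True
  | f :: fs => grng e = gsrc f /\ echain f fs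
  end.

Definition is_path (p : gpath) : Prop :=
  match p with PVert _ => True | PEdges e es => echain e es end.

Definition prng (p : gpath) : vert E :=
  match p with PVert v => v | PEdges e es => grng (last e es) end.

Definition pterm (p : gpath) : lterm :=
  match p with
  | PVert v => LV v
  | PEdges e es => foldl (fun acc f => LMul acc (LE f)) (LE e) es
  end.

Variables (ks : K -> K) (R : invAlg ks) (t : lterm -> R).

(* t is (induced by) a map on L_K(E) *)
Definition lpa_map : Prop := forall x y, leqv x y -> t x = t y.

Definition is_trace : Prop :=
  lpa_map /\ (forall x y, t (LAdd x y) = t x + t y) /\
  (forall x y, t (LMul x y) = t (LMul y x)).

Definition is_Klinear : Prop := forall a x, t (LScale a x) = a *: t x.

Definition is_canonical : Prop :=
  forall p q, is_path p -> is_path q -> prng p = prng q ->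
    (p = q -> t (LMul (pterm p) (lstar ks (pterm q))) = t (LV (prng p))) /\
    (p <> q -> t (LMul (pterm p) (lstar ks (pterm q))) = 0).

Definition is_positive : Prop :=
  forall x, (exists zs : seq lterm,
               leqv x (lsum [seq LMul z (lstar ks z) | z <- zs])) ->
  nonneg (t x).

Definition condP : Prop :=
  forall (v : vert E) (I : seq (edge E)),
    List.NoDup I -> (forall e, List.In e I -> gsrc e = v) ->
    nonneg (t (LAdd (LV v) (LScale (-1) (lsum [seq LV (grng e) | e <- I])))).

End Leavitt.

From mathcomp Require Import all_boot all_algebra.
From Stdlib Require Import Setoid Morphisms.
From mathcomp Require Import boolp.
Set Implicit Arguments. Unset Strict Implicit. Unset Printing Implicit Defensive.
Import GRing.Theory.
Local Open Scope ring_scope.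

(* Every element z of L_K(E) is a linear combination of monomials a p q^*
   with r(p) = r(q), and canonicity turns t(z z^* ) into a Gram form
   sum_(x,y) a_x a_y^* G(x,y) whose entries are traces of vertices; the form
   splits along the source v of q. For monomials with q starting at v and a
   set I of edges at v starting no q, let z_0 be the part of z with trivial q.
   Then t(z z^* ) - t(z_0 (sum_(e in I) e e^* ) z_0^* ) >= 0, by descent on the
   total length of the q's: an edge e starting some q moves into I and splits
   off the nonnegative t((z e)(z e)^* ); when every q is trivial the expression
   is a sum of terms c c^* t(v - sum_(e in I) r(e)), nonnegative by (P).
   Conversely, for z = v - sum_(e in I) e e^* the Gram form of t(z z^* ) is the
   expression in (P). *)

Lemma cat_injr (A : Type) (p : seq A) : injective (cat p).
Proof. by elim: p => //= a p IH s s' [] /IH. Qed.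

Lemma cat_eq_self (A : Type) (p s : seq A) : p ++ s = p -> s = [::].
Proof. by move=> /(congr1 size); rewrite size_cat -{2}[size p]addn0 => /addnI /size0nil. Qed.

Lemma List_In_pmap (A B : Type) (h : A -> option B) (F : seq A) (b : B) :
  List.In b (pmap h F) -> exists2 x, List.In x F & h x = Some b.
Proof.
elim: F => [|x F IH] //=; case hx: (h x) => [c|] /=; last by case/IH=> y; exists y; [right|].
by case=> [<-|/IH [y]]; [exists x; [left|] | exists y; [right|]].
Qed.

Lemma size_pmap_le (A B : Type) (h : A -> option B) (F : seq A) :
  (size (pmap h F) <= size F)%N.
Proof. by elim: F => //= x F IH; case: (h x) => [b|] //=; apply: leqW. Qed.

Lemma big_pmap (V : Type) (idx : V) (op : Monoid.law idx) (A B : Type)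
    (h : A -> option B) (g : B -> V) (F : seq A) :
  \big[op/idx]_(a <- pmap h F) g a = \big[op/idx]_(x <- F) oapp g idx (h x).
Proof.
elim: F => [|x F IH] /=; first by rewrite !big_nil.
by rewrite big_cons; case: (h x) => [b|] /=; rewrite ?Monoid.mul1m // big_cons IH.
Qed.

Lemma eq_big_List_In (I : Type) (V : nmodType) (F : seq I) (f g : I -> V) :
  (forall x, List.In x F -> f x = g x) -> \sum_(x <- F) f x = \sum_(x <- F) g x.
Proof.
elim: F => [|a F IH] h; first by rewrite !big_nil.
by rewrite !big_cons h ?IH //; [move=> x hx; apply: h; right | left].
Qed.

Lemma sum_ltn (A : Type) (F : seq A) (a b : A -> nat) (x0 : A) :
  (forall x, (a x <= b x)%N) -> List.In x0 F -> (a x0 < b x0)%N ->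
  (\sum_(x <- F) a x < \sum_(x <- F) b x)%N.
Proof.
move=> hab; elim: F => [|x F IH] //= [<-|h] hlt; rewrite !big_cons.
  by rewrite -addSn; apply: leq_add => //; apply: leq_sum.
by rewrite -addnS; apply: leq_add => //; apply: IH.
Qed.

Lemma sum_delta (A : Type) (V : nmodType) (I : seq A) (e : A) (c : V) :
  List.NoDup I -> List.In e I -> \sum_(f <- I) (if `[< e = f >] then c else 0) = c.
Proof.
elim: I => [|f I IH] //= /List.NoDup_cons_iff [fI hI]; rewrite big_cons.
case=> [<-|eI]; last by rewrite asboolF ?add0r ?IH // => ef; apply: fI; rewrite -ef.
rewrite asboolT // (eq_big_List_In (g := fun=> 0)) ?big1 ?addr0 // => g gI.
by rewrite asboolF // => eg; apply: fI; rewrite eg.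
Qed.

#[export] Hint Resolve leqv_refl : core.

Section LeavittTerms.
Variables (K : fieldType) (E : graph).
Local Notation T := (lterm K E).
Local Notation Z := (@LZero K E).

#[global] Instance leqv_equiv : Equivalence (@leqv K E).
Proof. by split; [exact: leqv_refl | exact: leqv_sym | exact: leqv_trans]. Qed.
#[global] Instance LAdd_proper : Proper (@leqv K E ==> @leqv K E ==> @leqv K E) (@LAdd K E).
Proof. by move=> ? ? h ? ? h'; apply: leqv_add. Qed.
#[global] Instance LMul_proper : Proper (@leqv K E ==> @leqv K E ==> @leqv K E) (@LMul K E).
Proof. by move=> ? ? h ? ? h'; apply: leqv_mul. Qed.
#[global] Instance LScale_proper a : Proper (@leqv K E ==> @leqv K E) (@LScale K E a).
Proof. by move=> ? ? h; apply: leqv_scale. Qed.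

Lemma ladd0l (x : T) : leqv (LAdd Z x) x.
Proof. by rewrite ax_addC ax_add0. Qed.

Lemma leqv0_double (y : T) : leqv y (LAdd y y) -> leqv y Z.
Proof.
move=> h; transitivity (LAdd (LAdd y y) (LScale (-1) y)).
  by rewrite ax_addA ax_addN ax_add0.
by rewrite -h ax_addN.
Qed.

Lemma lscale0 a : leqv (LScale a Z) Z.
Proof. by apply: leqv0_double; rewrite -ax_scaleDr ax_add0. Qed.
Lemma lmul0r (x : T) : leqv (LMul x Z) Z.
Proof. by apply: leqv0_double; rewrite -ax_mulDr ax_add0. Qed.
Lemma lmul0l (x : T) : leqv (LMul Z x) Z.
Proof. by apply: leqv0_double; rewrite -ax_mulDl ax_add0. Qed.

Lemma lscale_mul a b (x y : T) :
  leqv (LMul (LScale a x) (LScale b y)) (LScale (a * b) (LMul x y)).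
Proof. by rewrite -ax_scaleMl -ax_scaleMr ax_scaleA. Qed.

Lemma lsum1 (x : T) : leqv (lsum [:: x]) x.
Proof. exact: ax_add0. Qed.

Lemma lsum_cat (A B : seq T) : leqv (lsum (A ++ B)) (LAdd (lsum A) (lsum B)).
Proof. by elim: A => [|a A IH] /=; rewrite ?ladd0l // IH ax_addA. Qed.

Lemma lscale_sum a (A : seq T) : leqv (LScale a (lsum A)) (lsum (map (LScale a) A)).
Proof. by elim: A => [|x A IH] /=; rewrite ?lscale0 // ax_scaleDr IH. Qed.

Lemma lmul_suml (A : seq T) y :
  leqv (LMul (lsum A) y) (lsum (map (fun a => LMul a y) A)).
Proof. by elim: A => [|x A IH] /=; rewrite ?lmul0l // ax_mulDl IH. Qed.

Lemma lmul_sumr (A : seq T) y :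
  leqv (LMul y (lsum A)) (lsum (map (fun a => LMul y a) A)).
Proof. by elim: A => [|x A IH] /=; rewrite ?lmul0r // ax_mulDr IH. Qed.

Lemma eq_lsum_map (A : Type) (f g : A -> T) (l : seq A) :
  (forall a, List.In a l -> leqv (f a) (g a)) -> leqv (lsum (map f l)) (lsum (map g l)).
Proof.
elim: l => //= a l IH h.
by rewrite (h a) ?IH //; [move=> b hb; apply: h; right | left].
Qed.

End LeavittTerms.

Section Involution.
Variables (K : fieldType) (E : graph) (ks : K -> K).
Hypothesis Hks : field_involution ks.

Lemma ksD a b : ks (a + b) = ks a + ks b. Proof. by case: Hks. Qed.
Lemma ksM a b : ks (a * b) = ks a * ks b. Proof. by case: Hks => _ []. Qed.
Lemma ksK a : ks (ks a) = a. Proof. by case: Hks => _ []. Qed.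

Lemma ks0 : ks 0 = 0.
Proof. by apply: (addrI (ks 0)); rewrite addr0 -ksD addr0. Qed.

Lemma ks1 : ks 1 = 1.
Proof.
have ks1_neq0 : ks 1 != 0.
  by apply/eqP => h; have := ksK 1; rewrite h ks0 => /eqP; rewrite eq_sym oner_eq0.
by apply: (mulfI ks1_neq0); rewrite -ksM !mulr1.
Qed.

Lemma ksN a : ks (- a) = - ks a.
Proof. by apply/eqP; rewrite -subr_eq0 opprK -ksD addNr ks0. Qed.

Lemma ks_sum (A : Type) (F : seq A) (P : pred A) (c : A -> K) :
  ks (\sum_(a <- F | P a) c a) = \sum_(a <- F | P a) ks (c a).
Proof. exact: (big_morph ks ksD ks0). Qed.

Lemma lstar_lsum (A : seq (lterm K E)) : lstar ks (lsum A) = lsum (map (lstar ks) A).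
Proof. by elim: A => //= a A ->. Qed.

Lemma leqv_lstar (x y : lterm K E) : leqv x y -> leqv (lstar ks x) (lstar ks y).
Proof.
elim=> {x y} /=.
- by [].
- by move=> x y _ h; symmetry.
- by move=> x y z _ h1 _ h2; rewrite h1.
- by move=> x x' y y' _ h1 _ h2; rewrite h1 h2.
- by move=> x x' y y' _ h1 _ h2; rewrite h1 h2.
- by move=> a x x' _ h; rewrite h.
- by move=> x y; apply: ax_addC.
- by move=> x y z; apply: ax_addA.
- by move=> x; apply: ax_add0.
- by move=> x; rewrite ksN ks1; apply: ax_addN.
- by move=> a x y; apply: ax_scaleDr.
- by move=> a b x; rewrite ksD; apply: ax_scaleDl.
- by move=> a b x; rewrite ksM; apply: ax_scaleA.
- by move=> x; rewrite ks1; apply: ax_scale1.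
- by move=> x y z; symmetry; apply: ax_mulA.
- by move=> x y z; apply: ax_mulDl.
- by move=> x y z; apply: ax_mulDr.
- by move=> a x y; apply: ax_scaleMr.
- by move=> a x y; apply: ax_scaleMl.
- by move=> v; apply: rel_V1.
- by move=> v w h; apply: rel_V0 => e; apply: h.
- by move=> e; apply: rel_E2s.
- by move=> e; apply: rel_E2r.
- by move=> e; apply: rel_E1r.
- by move=> e; apply: rel_E1s.
- by move=> e; apply: rel_CK1.
- by move=> e f h; apply: rel_CK1' => ef; apply: h.
- by move=> v l hl; rewrite lstar_lsum -map_comp; apply: rel_CK2.
Qed.

End Involution.

Section Walks.
Variables (K : fieldType) (E : graph).
Local Notation T := (lterm K E).
Local Notation Z := (LZero K E).
Local Notation LV := (@LV K E).
Local Notation LE := (@LE K E).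
Local Notation LG := (@LG K E).

(* A walk is a sequence of edges together with its starting vertex, so that
   the empty walk at [v] still remembers [v]. *)
Fixpoint is_walk (v : vert E) (l : seq (edge E)) : Prop :=
  if l is e :: l' then gsrc e = v /\ is_walk (grng e) l' else True.
Fixpoint walk_end (v : vert E) (l : seq (edge E)) : vert E :=
  if l is e :: l' then walk_end (grng e) l' else v.
Fixpoint walk_term (v : vert E) (l : seq (edge E)) : T :=
  if l is e :: l' then LMul (LE e) (walk_term (grng e) l') else LV v.
Fixpoint ghost_term (v : vert E) (l : seq (edge E)) : T :=
  if l is e :: l' then LMul (ghost_term (grng e) l') (LG e) else LV v.

Lemma lstar_walk_term ks v l : lstar ks (walk_term v l) = ghost_term v l.
Proof. by elim: l v => //= e l IH v; rewrite IH. Qed.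
Lemma lstar_ghost_term ks v l : lstar ks (ghost_term v l) = walk_term v l.
Proof. by elim: l v => //= e l IH v; rewrite IH. Qed.

Lemma walk_end_cat u p s : walk_end u (p ++ s) = walk_end (walk_end u p) s.
Proof. by elim: p u => //= e p IH u. Qed.

Lemma is_walk_cat u p s : is_walk u (p ++ s) <-> is_walk u p /\ is_walk (walk_end u p) s.
Proof. by elim: p u => /= [|e p IH] u; [tauto | rewrite IH; tauto]. Qed.

Lemma lmul_vert_walk u p : is_walk u p -> leqv (LMul (LV u) (walk_term u p)) (walk_term u p).
Proof.
case: p => [|e p] /= h; first exact: rel_V1.
by case: h => <- _; rewrite -ax_mulA rel_E1s.
Qed.

Lemma lmul_ghost_vert w q : is_walk w q -> leqv (LMul (ghost_term w q) (LV w)) (ghost_term w q).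
Proof.
case: q => [|e q] /= h; first exact: rel_V1.
by case: h => <- _; rewrite ax_mulA rel_E2s.
Qed.

Lemma lmul_vert_walk_neq w u p : is_walk u p -> w <> u ->
  leqv (LMul (LV w) (walk_term u p)) Z.
Proof. by move=> h wu; rewrite -(lmul_vert_walk h) -ax_mulA rel_V0 // lmul0l. Qed.

Lemma lmul_ghost_vert_neq w q u : is_walk w q -> w <> u ->
  leqv (LMul (ghost_term w q) (LV u)) Z.
Proof. by move=> h wu; rewrite -(lmul_ghost_vert h) ax_mulA rel_V0 // lmul0r. Qed.

Lemma walk_term_cat u p s : is_walk u p -> is_walk (walk_end u p) s ->
  leqv (LMul (walk_term u p) (walk_term (walk_end u p) s)) (walk_term u (p ++ s)).
Proof.
elim: p u => [|e p IH] u /= hp hs; first exact: lmul_vert_walk.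
by case: hp => _ hp; rewrite ax_mulA IH.
Qed.

Lemma ghost_term_cat w q s : is_walk w q -> is_walk (walk_end w q) s ->
  leqv (LMul (ghost_term (walk_end w q) s) (ghost_term w q)) (ghost_term w (q ++ s)).
Proof.
elim: q w => [|e q IH] w /= hq hs; first exact: lmul_ghost_vert.
by case: hq => _ hq; rewrite -ax_mulA IH.
Qed.

Lemma ghost_walk_mul q : forall w u p, is_walk w q -> is_walk u p ->
  [/\ forall s, u = w -> p = q ++ s ->
        leqv (LMul (ghost_term w q) (walk_term u p)) (walk_term (walk_end w q) s),
      forall s, u = w -> q = p ++ s ->
        leqv (LMul (ghost_term w q) (walk_term u p)) (ghost_term (walk_end u p) s)
    & u <> w \/ ((forall s, p <> q ++ s) /\ (forall s, q <> p ++ s)) ->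
        leqv (LMul (ghost_term w q) (walk_term u p)) Z].
Proof.
elim: q => [|e q IH] w u p hq hp /=.
  split=> [s uw ps | s -> | [uw|[pq _]]]; first by subst; apply: lmul_vert_walk.
  - by case: p hp => [|f p] _; case: s => [|g s] //= _; apply: rel_V1.
  - by apply: lmul_vert_walk_neq => // wu; apply: uw.
  - by case: (pq p).
case: hq => se hq; case: p hp => [|f p] hp /=.
  split=> [s _ // | s -> <- /= | [uw|[_ qp]]].
  - exact: (@lmul_ghost_vert w (e :: q)).
  - by apply: (@lmul_ghost_vert_neq w (e :: q)) => //= wu; apply: uw.
  - by case: (qp (e :: q)).
case: hp => sf hp.
have reassoc : leqv
    (LMul (LMul (ghost_term (grng e) q) (LG e)) (LMul (LE f) (walk_term (grng f) p)))
    (LMul (ghost_term (grng e) q) (LMul (LMul (LG e) (LE f)) (walk_term (grng f) p))).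
  by rewrite !ax_mulA.
have [ef|nef] := pselect (e = f); last first.
  split=> [s _ [fe] | s _ [ef] | _]; [by case: nef | by case: nef |].
  by rewrite reassoc rel_CK1' // lmul0l lmul0r.
subst f.
have cancel : leqv (LMul (LMul (ghost_term (grng e) q) (LG e)) (LMul (LE e) (walk_term (grng e) p)))
    (LMul (ghost_term (grng e) q) (walk_term (grng e) p)).
  by rewrite reassoc rel_CK1 lmul_vert_walk.
have [I1 I2 I3] := IH (grng e) (grng e) p hq hp.
split=> [s _ [hs] | s _ [hs] | [uw|[h1 h2]]]; rewrite cancel.
- exact: I1.
- exact: I2.
- by case: uw; rewrite -se -sf.
- by apply: I3; right; split=> s hs; [apply: (h1 s) | apply: (h2 s)]; rewrite hs.
Qed.

Definition gpath_of_walk (u : vert E) (p : seq (edge E)) : gpath E :=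
  if p is e :: es then PEdges e es else PVert u.

Lemma is_path_of_walk u p : is_walk u p -> is_path (gpath_of_walk u p).
Proof.
case: p => [|e p] //= [_ hp].
by elim: p e hp => //= f p IH e [-> hp]; split; last apply: IH.
Qed.

Lemma prng_of_walk u p : prng (gpath_of_walk u p) = walk_end u p.
Proof. by case: p => [|e p] //=; elim: p e => //= f p IH e. Qed.

Lemma gpath_of_walk_inj u p u' p' : is_walk u p -> is_walk u' p' ->
  gpath_of_walk u p = gpath_of_walk u' p' -> u = u' /\ p = p'.
Proof.
case: p => [|e p]; case: p' => [|e' p'] //=; first by move=> _ _ [].
by move=> [<- _] [<- _] [-> ->].
Qed.

Local Notation append_edges := (foldl (fun acc f => LMul acc (LE f))).

Lemma leqv_append_edges (l : seq (edge E)) (a b : T) : leqv a b ->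
  leqv (append_edges a l) (append_edges b l).
Proof. by elim: l a b => //= f l IH a b h; apply: IH; rewrite h. Qed.

Lemma lmul_walk_term l : forall w (x : T), is_walk w l ->
  leqv (LMul x (walk_term w l)) (append_edges (LMul x (LV w)) l).
Proof.
elim: l => [|f l IH] w x //= [sf hl].
rewrite -ax_mulA IH //; apply: leqv_append_edges.
by rewrite ax_mulA rel_E1r ax_mulA -sf rel_E1s.
Qed.

Lemma walk_term_pterm u p : is_walk u p -> leqv (walk_term u p) (pterm K (gpath_of_walk u p)).
Proof.
case: p => [|e p] //= [_ hp].
by rewrite lmul_walk_term //; apply: leqv_append_edges; apply: rel_E1r.
Qed.

End Walks.

Section Monomials.
Variables (K : fieldType) (E : graph).
Local Notation T := (lterm K E).
Local Notation walk_term := (@walk_term K E).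
Local Notation ghost_term := (@ghost_term K E).

(* [Monomial a u p w q] stands for a p q^*, where p is a walk from u, q a walk
   from w, and both end at the same vertex. *)
Record monomial := Monomial {
  mcoef : K; msrc : vert E; mpath : seq (edge E); mdst : vert E; mghost : seq (edge E) }.

Definition wf_monomial (x : monomial) : Prop :=
  [/\ is_walk (msrc x) (mpath x), is_walk (mdst x) (mghost x)
    & walk_end (msrc x) (mpath x) = walk_end (mdst x) (mghost x)].

Definition wf_monomials (F : seq monomial) : Prop :=
  forall x, List.In x F -> wf_monomial x.

Definition mterm (x : monomial) : T :=
  LScale (mcoef x) (LMul (walk_term (msrc x) (mpath x)) (ghost_term (mdst x) (mghost x))).

Definition msum (F : seq monomial) : T := lsum (map mterm F).

Lemma wf_monomials_cat F G : wf_monomials F -> wf_monomials G -> wf_monomials (F ++ G).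
Proof. by move=> hF hG m; rewrite List.in_app_iff => -[]; [apply: hF | apply: hG]. Qed.

Lemma msum_cat F G : leqv (msum (F ++ G)) (LAdd (msum F) (msum G)).
Proof. by rewrite /msum map_cat lsum_cat. Qed.

Definition has_normal_form (z : T) : Prop :=
  exists2 F, wf_monomials F & leqv z (msum F).

Lemma has_normal_form_leqv (z z' : T) :
  leqv z z' -> has_normal_form z' -> has_normal_form z.
Proof. by move=> h [F hF e]; exists F => //; rewrite h. Qed.

Lemma has_normal_form_monomial x : wf_monomial x -> has_normal_form (mterm x).
Proof. by move=> hx; exists [:: x]; [move=> m [<-|] | rewrite /msum lsum1]. Qed.

Lemma has_normal_form_add (y z : T) :
  has_normal_form y -> has_normal_form z -> has_normal_form (LAdd y z).
Proof.
move=> [F hF eF] [G hG eG]; exists (F ++ G); first exact: wf_monomials_cat.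
by rewrite msum_cat eF eG.
Qed.

Lemma monomial_mul x y : wf_monomial x -> wf_monomial y ->
  has_normal_form (LMul (mterm x) (mterm y)).
Proof.
case: x => a ux px wx qx; case: y => b uy py wy qy.
rewrite /wf_monomial /mterm /= => -[cx cqx rx] [cy cqy ry].
apply: (has_normal_form_leqv (lscale_mul _ _ _ _)).
have reassoc : leqv
    (LMul (LMul (walk_term ux px) (ghost_term wx qx)) (LMul (walk_term uy py) (ghost_term wy qy)))
    (LMul (walk_term ux px) (LMul (LMul (ghost_term wx qx) (walk_term uy py)) (ghost_term wy qy))).
  by rewrite !ax_mulA.
apply: (has_normal_form_leqv (leqv_scale (a * b) reassoc)).
have [I1 I2 I3] := ghost_walk_mul K cqx cy.
have [[e1 [s hs]]|n1] := pselect (uy = wx /\ exists s, py = qx ++ s).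
  have cs : is_walk (walk_end ux px) s by move: cy; rewrite hs e1 is_walk_cat rx => -[].
  apply: (has_normal_form_leqv (z' := mterm (Monomial (a * b) ux (px ++ s) wy qy))).
    by rewrite /mterm /= (I1 s e1 hs) -rx -ax_mulA walk_term_cat.
  apply: has_normal_form_monomial; split=> //=; first by apply/is_walk_cat.
  by rewrite -ry hs e1 !walk_end_cat rx.
have [[e1 [s hs]]|n2] := pselect (uy = wx /\ exists s, qx = py ++ s).
  have cs : is_walk (walk_end wy qy) s by move: cqx; rewrite hs -e1 is_walk_cat ry => -[].
  apply: (has_normal_form_leqv (z' := mterm (Monomial (a * b) ux px wy (qy ++ s)))).
    by rewrite /mterm /= (I2 s e1 hs) ry ghost_term_cat.
  apply: has_normal_form_monomial; split=> //=; first by apply/is_walk_cat.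
  by rewrite rx hs walk_end_cat -e1 ry walk_end_cat.
exists [::] => //; rewrite I3 ?lmul0l ?lmul0r ?lscale0 //.
have [uw|] := pselect (uy = wx); last by left.
by right; split=> s hs; [apply: n1 | apply: n2]; split=> //; exists s.
Qed.

Lemma msum_mul F G : wf_monomials F -> wf_monomials G ->
  has_normal_form (LMul (msum F) (msum G)).
Proof.
elim: F => [|x F IHF] hF hG /=.
  by exists [::] => //; rewrite lmul0l.
apply: (has_normal_form_leqv (ax_mulDl _ _ _)); apply: has_normal_form_add; last first.
  by apply: IHF => // m hm; apply: hF; right.
have hx : wf_monomial x by apply: hF; left.
elim: G hG {IHF} => [|y G IHG] hG /=; first by exists [::] => //; rewrite lmul0r.
apply: (has_normal_form_leqv (ax_mulDr _ _ _)); apply: has_normal_form_add.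
  by apply: monomial_mul => //; apply: hG; left.
by apply: IHG => m hm; apply: hG; right.
Qed.

Lemma normal_form (z : T) : has_normal_form z.
Proof.
elim: z.
- move=> v; apply: (has_normal_form_leqv (z' := mterm (Monomial 1 v [::] v [::]))).
    by rewrite /mterm /= ax_scale1 rel_V1.
  exact: has_normal_form_monomial.
- move=> e; apply: (has_normal_form_leqv (z' := mterm (Monomial 1 (gsrc e) [:: e] (grng e) [::]))).
    by rewrite /mterm /= ax_scale1 ax_mulA rel_V1 rel_E1r.
  exact: has_normal_form_monomial.
- move=> e; apply: (has_normal_form_leqv (z' := mterm (Monomial 1 (grng e) [::] (gsrc e) [:: e]))).
    by rewrite /mterm /= ax_scale1 -ax_mulA rel_V1 rel_E2r.
  exact: has_normal_form_monomial.
- by exists [::].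
- by move=> y hy z hz; apply: has_normal_form_add.
- move=> y [F hF eF] z [G hG eG].
  by apply: (has_normal_form_leqv (leqv_mul eF eG)); apply: msum_mul.
- move=> a y [F hF eF].
  exists (map (fun m => Monomial (a * mcoef m) (msrc m) (mpath m) (mdst m) (mghost m)) F).
    by move=> m /List.in_map_iff [m' [<- /hF]].
  rewrite eF /msum lscale_sum -!map_comp; apply: eq_lsum_map => m _ /=.
  by rewrite /mterm /= ax_scaleA.
Qed.

End Monomials.

Section Gram.
Variables (K : fieldType) (E : graph) (ks : K -> K) (R : invAlg ks) (t : lterm K E -> R).
Local Notation monomial := (monomial K E).

Definition vtrace (v : vert E) : R := t (LV K v).

Definition extends (x y : monomial) : Prop :=
  [/\ msrc x = msrc y, mdst x = mdst y
    & exists s, mpath y = mpath x ++ s /\ mghost y = mghost x ++ s].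

(* The value of t on (p_x q_x^* ) (p_y q_y^* )^*, see [trace_gram] below. *)
Definition gram (x y : monomial) : R :=
  if `[< extends x y >] then vtrace (walk_end (msrc y) (mpath y))
  else if `[< extends y x >] then vtrace (walk_end (msrc x) (mpath x)) else 0.

Lemma extends_antisym (x y : monomial) :
  extends x y -> extends y x -> msrc x = msrc y /\ mpath x = mpath y.
Proof.
move=> [eu _ [s [hxy _]]] [_ _ [s' [hyx _]]]; split=> //.
have : s' ++ s = [::] by apply: (@cat_eq_self _ (mpath y)); rewrite catA -hyx.
rewrite hxy => /(congr1 size)/eqP; rewrite size_cat addn_eq0 => /andP[_ /eqP/size0nil ->].
by rewrite cats0.
Qed.

Lemma gramC (x y : monomial) : gram x y = gram y x.
Proof.
rewrite /gram; case: (asboolP (extends x y)) => hxy; case: (asboolP (extends y x)) => hyx //.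
by have [-> ->] := extends_antisym hxy hyx.
Qed.

Lemma gram_ghost_extends (x y : monomial) s :
  mdst x = mdst y -> mghost y = mghost x ++ s ->
  gram x y = if `[< msrc x = msrc y /\ mpath y = mpath x ++ s >]
             then vtrace (walk_end (msrc y) (mpath y)) else 0.
Proof.
move=> ew eq; have exy : extends x y <-> msrc x = msrc y /\ mpath y = mpath x ++ s.
  split=> [[eu _ [s' [ep eq']]] | [eu ep]]; last by split=> //; exists s.
  by split=> //; rewrite ep (@cat_injr _ _ _ _ (eq_trans (esym eq') eq)).
rewrite /gram (asbool_equiv_eq exy); case: asboolP => // nxy.
rewrite asboolF // => -[eu _ [s0 [ep eq0]]]; apply: nxy.
have : s0 ++ s = [::] by apply: (@cat_eq_self _ (mghost y)); rewrite catA -eq0 -eq.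
by case: s0 ep {eq0} => [|//] ep /= ->; rewrite ep !cats0.
Qed.

Lemma gram_ghost_incomparable (x y : monomial) :
  (forall s, mghost y <> mghost x ++ s) -> (forall s, mghost x <> mghost y ++ s) ->
  gram x y = 0.
Proof.
move=> nxy nyx; rewrite /gram !asboolF // => -[_ _ [s [_ h]]]; [exact: nyx h | exact: nxy h].
Qed.

Lemma gram_dst_neq (x y : monomial) : mdst x <> mdst y -> gram x y = 0.
Proof. by move=> ne; rewrite /gram !asboolF // => -[_ h _]; apply: ne. Qed.

End Gram.

Section CanonicalTrace.
Variables (K : fieldType) (E : graph) (ks : K -> K) (R : invAlg ks) (t : lterm K E -> R).
Hypotheses (Hks : field_involution ks) (Htr : is_trace t) (Hlin : is_Klinear t)
  (Hcan : is_canonical t).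
Local Notation T := (lterm K E).
Local Notation monomial := (monomial K E).
Local Notation walk_term := (@walk_term K E).
Local Notation ghost_term := (@ghost_term K E).
Local Notation vtrace := (vtrace t).
Local Notation gram := (gram t).

Lemma trace_leqv (x y : T) : leqv x y -> t x = t y.
Proof. by case: Htr => h _; apply: h. Qed.

Lemma traceD (x y : T) : t (LAdd x y) = t x + t y.
Proof. by case: Htr => _ []. Qed.

Lemma trace0 : t (LZero K E) = 0.
Proof.
by apply: (addrI (t (LZero K E))); rewrite addr0 -traceD; apply: trace_leqv; apply: ax_add0.
Qed.

Lemma trace_lsum (A : seq T) : t (lsum A) = \sum_(a <- A) t a.
Proof. by elim: A => [|a A IH] /=; rewrite ?big_nil ?trace0 // big_cons traceD IH. Qed.

Lemma trace_mul_lsum (A B : seq T) :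
  t (LMul (lsum A) (lsum B)) = \sum_(a <- A) \sum_(b <- B) t (LMul a b).
Proof.
rewrite (trace_leqv (lmul_suml _ _)) trace_lsum big_map; apply: eq_bigr => a _.
by rewrite (trace_leqv (lmul_sumr _ _)) trace_lsum big_map.
Qed.

Lemma trace_walk_ghost u p u' p' : is_walk u p -> is_walk u' p' ->
  walk_end u p = walk_end u' p' ->
  t (LMul (walk_term u p) (ghost_term u' p')) =
    if `[< u = u' /\ p = p' >] then vtrace (walk_end u p) else 0.
Proof.
move=> c c' r.
rewrite (trace_leqv (leqv_mul (walk_term_pterm K c) (leqv_refl _))) -(lstar_walk_term ks).
rewrite (trace_leqv (leqv_mul (leqv_refl _) (leqv_lstar Hks (walk_term_pterm K c')))).
have [hpp hpq] := Hcan (is_path_of_walk c) (is_path_of_walk c') (etrans (prng_of_walk u p)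
  (etrans r (esym (prng_of_walk u' p')))).
case: asboolP => [[eu ep]|ne]; first by subst; rewrite hpp // prng_of_walk.
by rewrite hpq // => /(gpath_of_walk_inj c c').
Qed.

Lemma trace_gram (x y : monomial) : wf_monomial x -> wf_monomial y ->
  t (LMul (LMul (walk_term (msrc x) (mpath x)) (ghost_term (mdst x) (mghost x)))
          (LMul (walk_term (mdst y) (mghost y)) (ghost_term (msrc y) (mpath y)))) = gram x y.
Proof.
case: x => a ux px wx qx; case: y => b uy py wy qy.
rewrite /wf_monomial /= => -[cx cqx rx] [cy cqy ry].
rewrite (@trace_leqv _ (LMul (walk_term ux px)
    (LMul (LMul (ghost_term wx qx) (walk_term wy qy)) (ghost_term uy py)))); last first.
  by rewrite !ax_mulA.
have [I1 I2 I3] := ghost_walk_mul K cqx cqy.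
have [[ew [s hs]]|n1] := pselect (wy = wx /\ exists s, qy = qx ++ s).
  have cs : is_walk (walk_end ux px) s by move: cqy; rewrite hs ew is_walk_cat rx => -[].
  rewrite (@trace_leqv _ (LMul (walk_term ux (px ++ s)) (ghost_term uy py))); last first.
    by rewrite (I1 s ew hs) -rx -ax_mulA walk_term_cat.
  rewrite trace_walk_ghost //; first last.
  - by rewrite walk_end_cat rx -walk_end_cat -hs -ew ry.
  - exact/is_walk_cat.
  rewrite (gram_ghost_extends _ (x := Monomial a ux px wx qx) (y := Monomial b uy py wy qy)
    (esym ew) hs) /=.
  case: (asboolP (ux = uy /\ px ++ s = py)) => [[<- <-]|ne]; first by rewrite asboolT.
  by rewrite asboolF // => -[eu ep]; apply: ne; split; rewrite ?ep.
have [[ew [s hs]]|n2] := pselect (wy = wx /\ exists s, qx = qy ++ s).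
  have cs : is_walk (walk_end uy py) s by move: cqx; rewrite hs -ew is_walk_cat ry => -[].
  rewrite (@trace_leqv _ (LMul (walk_term ux px) (ghost_term uy (py ++ s)))); last first.
    by rewrite (I2 s ew hs) -ry ghost_term_cat.
  rewrite trace_walk_ghost //; first last.
  - by rewrite rx hs -ew !walk_end_cat ry.
  - exact/is_walk_cat.
  rewrite gramC (gram_ghost_extends _ (x := Monomial b uy py wy qy) (y := Monomial a ux px wx qx)
    ew hs) /=.
  case: (asboolP (ux = uy /\ px = py ++ s)) => [[<- ->]|ne]; first by rewrite asboolT.
  by rewrite asboolF // => -[eu ep]; apply: ne; split.
have [ew|nw] := pselect (wy = wx); last first.
  rewrite gram_dst_neq /=; last by move=> e; apply: nw.
  by rewrite -trace0; apply: trace_leqv; rewrite (I3 (or_introl nw)) lmul0l lmul0r.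
have incomparable : (forall s, qy <> qx ++ s) /\ (forall s, qx <> qy ++ s).
  by split=> s hs; [apply: n1 | apply: n2]; split=> //; exists s.
rewrite gram_ghost_incomparable /=; try by case: incomparable.
by rewrite -trace0; apply: trace_leqv; rewrite (I3 (or_intror incomparable)) lmul0l lmul0r.
Qed.

Lemma trace_mterm_mul_lstar (x y : monomial) : wf_monomial x -> wf_monomial y ->
  t (LMul (mterm x) (lstar ks (mterm y))) = (mcoef x * ks (mcoef y)) *: gram x y.
Proof.
move=> hx hy; rewrite /mterm /= lstar_ghost_term lstar_walk_term.
by rewrite (trace_leqv (lscale_mul _ _ _ _)) Hlin trace_gram.
Qed.

Definition gram_entry (x y : monomial) : R := (mcoef x * ks (mcoef y)) *: gram x y.

Definition gram_form (F : seq monomial) : R := \sum_(x <- F) \sum_(y <- F) gram_entry x y.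

Lemma trace_norm_msum F : wf_monomials F ->
  t (LMul (msum F) (lstar ks (msum F))) = gram_form F.
Proof.
move=> hF; rewrite /msum lstar_lsum trace_mul_lsum big_map.
apply: eq_big_List_In => x hx; rewrite -map_comp big_map; apply: eq_big_List_In => y hy /=.
exact: trace_mterm_mul_lstar (hF x hx) (hF y hy).
Qed.

End CanonicalTrace.

Section Nonneg.
Variables (K : fieldType) (ks : K -> K) (R : invAlg ks).
Hypothesis Hks : field_involution ks.

Lemma nonneg0 : nonneg (0 : R).
Proof. by exists [::]; rewrite big_nil. Qed.

Lemma nonnegD (x y : R) : nonneg x -> nonneg y -> nonneg (x + y).
Proof. by move=> [zs ->] [ws ->]; exists (zs ++ ws); rewrite big_cat. Qed.

Lemma nonneg_sum (A : Type) (F : seq A) (f : A -> R) :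
  (forall a, List.In a F -> nonneg (f a)) -> nonneg (\sum_(a <- F) f a).
Proof.
elim: F => [|a F IH] h; first by rewrite big_nil; apply: nonneg0.
by rewrite big_cons; apply: nonnegD; [apply: h; left | apply: IH => b hb; apply: h; right].
Qed.

Lemma nonneg_scale_norm (c : K) (x : R) : nonneg x -> nonneg ((c * ks c) *: x).
Proof.
move=> [zs ->]; exists (map (fun z => c *: z) zs).
rewrite big_map scaler_sumr; apply: eq_bigr => z _.
by rewrite ia_starZ ia_mulZl ia_mulZr scalerA.
Qed.

(* The form is a sum over the classes of [key] of the nonnegative terms
   (sum_x c x) (sum_x c x)^* D. *)
Lemma nonneg_sum_same_key (I Key : Type) (c : I -> K) (key : I -> Key) (D : R) (L : seq I) :
  nonneg D ->
  nonneg (\sum_(x <- L) \sum_(y <- L)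
            (c x * ks (c y)) *: (if `[< key x = key y >] then D else 0)).
Proof.
move=> hD; elim: {L}_.+1 {-2}L (ltnSn (size L)) => // n IH [|h L] hs.
  by rewrite big_nil; apply: nonneg0.
set same := fun x => `[< key x = key h >].
have split_same (f : I -> R) : \sum_(x <- h :: L) f x =
    \sum_(x <- h :: L | same x) f x + \sum_(x <- h :: L | ~~ same x) f x.
  by rewrite (bigID same).
rewrite split_same; apply: nonnegD.
  rewrite (eq_bigr (fun x => (c x * ks (\sum_(y <- h :: L | same y) c y)) *: D)).
    by rewrite -scaler_suml -mulr_suml; apply: nonneg_scale_norm.
  move=> x /asboolP kx; rewrite split_same [X in _ + X]big1 ?addr0.
    rewrite (ks_sum Hks) mulr_sumr scaler_suml; apply: eq_bigr => y /asboolP ky.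
    by rewrite asboolT // kx ky.
  by move=> y /asboolP ky; rewrite asboolF ?scaler0 // => kxy; apply: ky; rewrite -kxy.
rewrite (eq_bigr (fun x => \sum_(y <- h :: L | ~~ same y)
    (c x * ks (c y)) *: (if `[< key x = key y >] then D else 0))).
  rewrite -big_filter; under eq_bigr do rewrite -big_filter.
  apply: IH; rewrite /= /same asboolT //= -ltnS; apply: leq_trans hs.
  by rewrite /= !ltnS size_filter count_size.
move=> x /asboolP kx; rewrite split_same big1 ?add0r // => y /asboolP ky.
by rewrite asboolF ?scaler0 // => kxy; apply: kx; rewrite kxy.
Qed.

End Nonneg.

Definition oentry (A : Type) (V : nmodType) (f : A -> A -> V) (a b : option A) : V :=
  if a is Some a' then (if b is Some b' then f a' b' else 0) else 0.

Lemma big_pmap2 (V : nmodType) (A B : Type) (h : A -> option B) (f : B -> B -> V) (F : seq A) :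
  \sum_(a <- pmap h F) \sum_(b <- pmap h F) f a b =
  \sum_(x <- F) \sum_(y <- F) oentry f (h x) (h y).
Proof.
rewrite big_pmap; apply: eq_bigr => x _; case: (h x) => [a|] /=; last by rewrite big1.
by rewrite big_pmap; apply: eq_bigr => y _; case: (h y).
Qed.

Section Descent.
Variables (K : fieldType) (E : graph) (ks : K -> K) (R : invAlg ks) (t : lterm K E -> R).
Local Notation monomial := (monomial K E).
Local Notation vtrace := (vtrace t).
Local Notation gram := (gram t).
Local Notation gram_entry := (gram_entry t).
Local Notation gram_form := (gram_form t).

(* For the element z represented by a list of monomials, [descend e]
   represents z e, and [keep e] represents z (v - e e^* ), except that on the
   monomials with trivial q the factor v - e e^* is kept aside, in
   [ghost_free_form]. *)
Definition descend (e : edge E) (x : monomial) : option monomial :=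
  match mghost x with
  | [::] => Some (Monomial (mcoef x) (msrc x) (rcons (mpath x) e) (grng e) [::])
  | f :: q => if `[< f = e >] then Some (Monomial (mcoef x) (msrc x) (mpath x) (grng e) q)
              else None
  end.

Definition keep (e : edge E) (x : monomial) : option monomial :=
  if mghost x is f :: _ then (if `[< f = e >] then None else Some x) else Some x.

Definition ghost_free_entry (D : R) (x y : monomial) : R :=
  if (mghost x, mghost y) is ([::], [::]) then
    (mcoef x * ks (mcoef y)) *: (if `[< msrc x = msrc y /\ mpath x = mpath y >] then D else 0)
  else 0.

Definition ghost_free_form (F : seq monomial) (D : R) : R :=
  \sum_(x <- F) \sum_(y <- F) ghost_free_entry D x y.

Lemma gram_cons e (x y : monomial) qx qy :
  mghost x = e :: qx -> mghost y = e :: qy -> mdst x = mdst y ->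
  gram (Monomial (mcoef x) (msrc x) (mpath x) (grng e) qx)
       (Monomial (mcoef y) (msrc y) (mpath y) (grng e) qy) = gram x y.
Proof.
move=> hx hy ew.
have cons_extends (a b : monomial) qa qb : mghost a = e :: qa -> mghost b = e :: qb ->
    mdst a = mdst b -> extends (Monomial (mcoef a) (msrc a) (mpath a) (grng e) qa)
      (Monomial (mcoef b) (msrc b) (mpath b) (grng e) qb) <-> extends a b.
  move=> ha hb eab; rewrite /extends /= ha hb.
  split=> -[eu _ [s [ep eq]]]; split=> //; exists s; split=> //; first by rewrite eq.
  by case: eq.
rewrite /gram /= (asbool_equiv_eq (cons_extends x y _ _ hx hy ew)).
by rewrite (asbool_equiv_eq (cons_extends y x _ _ hy hx (esym ew))).
Qed.

Lemma gram_ghost_free (x y : monomial) :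
  mghost x = [::] -> mghost y = [::] -> mdst x = mdst y ->
  gram x y = if `[< msrc x = msrc y /\ mpath x = mpath y >]
             then vtrace (walk_end (msrc y) (mpath y)) else 0.
Proof.
case: x => a ux px wx qx; case: y => b uy py wy qy /= -> -> ew.
rewrite (gram_ghost_extends t (s := [::])) //= cats0.
by congr (if _ then _ else _); apply: asbool_equiv_eq; split=> -[-> ->].
Qed.

Lemma gram_descend_ghost_free e (x y : monomial) :
  mghost x = [::] -> mghost y = [::] -> mdst x = mdst y ->
  oentry gram (descend e x) (descend e y) =
    if `[< msrc x = msrc y /\ mpath x = mpath y >] then vtrace (grng e) else 0.
Proof.
case: x => a ux px wx qx; case: y => b uy py wy qy /= -> -> ew.
rewrite /descend /= (gram_ghost_extends t (s := [::])) //= cats0.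
have -> : walk_end uy (rcons py e) = grng e by rewrite -cats1 walk_end_cat.
congr (if _ then _ else _); apply: asbool_equiv_eq.
by split=> -[-> ep]; split=> //; [apply/esym/(rcons_injl e) | rewrite ep].
Qed.

Lemma gram_entry_split D e (x y : monomial) : mdst x = mdst y ->
  gram_entry x y - ghost_free_entry D x y =
    oentry gram_entry (descend e x) (descend e y) +
    (oentry gram_entry (keep e x) (keep e y) -
     oentry (ghost_free_entry (vtrace (grng e) + D)) (keep e x) (keep e y)).
Proof.
move=> ew; case hx: (mghost x) => [|f qx]; case hy: (mghost y) => [|g qy].
- have gxy := gram_ghost_free hx hy ew; have gd := gram_descend_ghost_free e hx hy ew.
  move: gd; rewrite /descend /keep /gram_entry /ghost_free_entry hx hy /= ?hx ?hy gxy => ->.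
  case: asboolP => _; last by rewrite !scaler0 !subr0 add0r.
  by rewrite scalerDr addrA (addrC (_ *: vtrace (grng e))) addrKA.
- rewrite /descend /keep /ghost_free_entry hx hy /= ?hx ?hy subr0.
  case: asboolP => [<-|ne] /=; rewrite ?hx ?hy /=; last by rewrite add0r subr0.
  rewrite subrr addr0 /gram_entry /=; congr (_ *: _).
  rewrite (gram_ghost_extends t (s := g :: qy)) ?hx ?hy // (gram_ghost_extends t (s := qy)) //=.
  by rewrite cat_rcons.
- rewrite /descend /keep /ghost_free_entry hx hy /= ?hx ?hy subr0.
  case: asboolP => [<-|ne] /=; rewrite ?hx ?hy /=; last by rewrite add0r subr0.
  rewrite subrr addr0 /gram_entry /= (gramC t x) (gramC t (Monomial _ _ _ _ _)); congr (_ *: _).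
  rewrite (gram_ghost_extends t (s := f :: qx)) ?hx ?hy // (gram_ghost_extends t (s := qx)) //=.
  by rewrite cat_rcons.
rewrite /descend /keep /ghost_free_entry hx hy /= ?hx ?hy subr0.
case: asboolP => [<-|ne]; case: asboolP => [eg|ng] /=; rewrite ?hx ?hy ?subr0 ?add0r ?addr0 //.
- by move: hy; rewrite eg => hy; rewrite /gram_entry (gram_cons hx hy ew).
- rewrite /gram_entry gram_ghost_incomparable ?scaler0 // => s;
    by rewrite hx hy => -[fg _]; apply: ng; rewrite fg.
- rewrite /gram_entry gram_ghost_incomparable ?scaler0 // => s;
    by rewrite hx hy => -[fg _]; apply: ne; rewrite -eg fg.
Qed.

Lemma gram_form_split D e (F : seq monomial) v : (forall x, List.In x F -> mdst x = v) ->
  gram_form F - ghost_free_form F D =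
    gram_form (pmap (descend e) F) +
    (gram_form (pmap (keep e) F) - ghost_free_form (pmap (keep e) F) (vtrace (grng e) + D)).
Proof.
move=> hF; rewrite /gram_form /ghost_free_form !big_pmap2 -!sumrB -big_split.
apply: eq_big_List_In => x hx; rewrite -!sumrB -big_split; apply: eq_big_List_In => y hy.
by apply: gram_entry_split; rewrite !hF.
Qed.

Definition ghost_size (F : seq monomial) : nat := \sum_(x <- F) (size (mghost x)).+1.

Lemma ghost_size_pmap_lt (h : monomial -> option monomial) (F : seq monomial) x0 :
  (forall x, (oapp (fun y => (size (mghost y)).+1) 0 (h x) <= (size (mghost x)).+1)%N) ->
  List.In x0 F -> (oapp (fun y => (size (mghost y)).+1) 0 (h x0) < (size (mghost x0)).+1)%N ->
  (ghost_size (pmap h F) < ghost_size F)%N.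
Proof. by move=> hle hx0 hlt; rewrite /ghost_size big_pmap; apply: (sum_ltn hle hx0 hlt). Qed.

Lemma ghost_size_descend_lt e (F : seq monomial) x0 q0 :
  List.In x0 F -> mghost x0 = e :: q0 -> (ghost_size (pmap (descend e) F) < ghost_size F)%N.
Proof.
move=> hx0 hq0; apply: (ghost_size_pmap_lt _ hx0); last by rewrite /descend hq0 asboolT.
move=> x; rewrite /descend; case: (mghost x) => [|f q] //=.
by case: asboolP => _ //=; apply: leqW.
Qed.

Lemma ghost_size_keep_lt e (F : seq monomial) x0 q0 :
  List.In x0 F -> mghost x0 = e :: q0 -> (ghost_size (pmap (keep e) F) < ghost_size F)%N.
Proof.
move=> hx0 hq0; apply: (ghost_size_pmap_lt _ hx0); last by rewrite /keep hq0 asboolT.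
move=> x; rewrite /keep; case hx: (mghost x) => [|f q]; first by rewrite /= hx.
by case: ifP => //= _; rewrite hx.
Qed.

Lemma wf_descend e (x y : monomial) : wf_monomial x -> gsrc e = mdst x ->
  descend e x = Some y -> wf_monomial y /\ mdst y = grng e.
Proof.
case: x => a u p w q; rewrite /wf_monomial /descend /= => -[cp cq r] se.
case: q cq r => [|f q] /= cq r.
  case=> <-; split=> //; split=> //=; rewrite -cats1 ?walk_end_cat //.
  by apply/is_walk_cat; split=> //=; rewrite r.
case: asboolP => // <- [<-]; case: cq => _ cq; split=> //.
Qed.

Lemma keep_Some e (x y : monomial) :
  keep e x = Some y -> y = x /\ forall q, mghost x <> e :: q.
Proof.
rewrite /keep; case hx: (mghost x) => [|f q]; first by case=> ->.
by case: asboolP => // ne [->]; split=> // q' [fe _]; apply: ne.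
Qed.

Lemma ghost_free_form0 (F : seq monomial) : ghost_free_form F 0 = 0.
Proof.
rewrite /ghost_free_form big1 // => x _; rewrite big1 // => y _.
by rewrite /ghost_free_entry; case: (mghost x) => [|? ?]; case: (mghost y) => [|? ?];
  rewrite //= if_same scaler0.
Qed.

End Descent.


Section Positivity.
Variables (K : fieldType) (E : graph) (ks : K -> K) (R : invAlg ks) (t : lterm K E -> R).
Hypothesis Hks : field_involution ks.
Local Notation monomial := (monomial K E).
Local Notation vtrace := (vtrace t).
Local Notation gram_form := (gram_form t).

Lemma nonneg_gram_form_ghost_free (F : seq monomial) v D : nonneg (vtrace v - D) ->
  (forall x, List.In x F -> [/\ wf_monomial x, mdst x = v & mghost x = [::]]) ->
  nonneg (gram_form F - ghost_free_form F D).
Proof.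
move=> hD hF; suff -> : gram_form F - ghost_free_form F D =
    \sum_(x <- F) \sum_(y <- F) (mcoef x * ks (mcoef y)) *:
      (if `[< (msrc x, mpath x) = (msrc y, mpath y) >] then vtrace v - D else 0).
  exact: nonneg_sum_same_key.
rewrite /gram_form /ghost_free_form -sumrB; apply: eq_big_List_In => x hx.
rewrite -sumrB; apply: eq_big_List_In => y hy.
have [_ wx gx] := hF x hx; have [[_ _ ry] wy gy] := hF y hy.
rewrite /gram_entry /ghost_free_entry gx gy gram_ghost_free ?wx ?wy // ry gy /= wy.
rewrite -scalerBr; congr (_ *: _).
have -> : `[< (msrc x, mpath x) = (msrc y, mpath y) >] =
    `[< msrc x = msrc y /\ mpath x = mpath y >].
  by apply: asbool_equiv_eq; split=> [[-> ->] | [-> ->]].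
by case: ifP; rewrite ?subr0.
Qed.

Hypothesis HP : forall v J, List.NoDup J -> (forall e, List.In e J -> gsrc e = v) ->
  nonneg (vtrace v - \sum_(e <- J) vtrace (grng e)).

(* Descent on the total length of the ghost paths; [J] collects the edges
   already split off at the common vertex [v]. *)
Lemma nonneg_gram_form_descent n (F : seq monomial) v J : (ghost_size F <= n)%N ->
  (forall x, List.In x F -> wf_monomial x /\ mdst x = v) ->
  List.NoDup J -> (forall e, List.In e J -> gsrc e = v) ->
  (forall x e q, List.In x F -> mghost x = e :: q -> ~ List.In e J) ->
  nonneg (gram_form F - ghost_free_form F (\sum_(e <- J) vtrace (grng e))).
Proof.
elim: n F v J => [|n IH] F v J hn hF hJ hJv hFJ.
  case: F hn {hF hFJ} => [|x F]; last by rewrite /ghost_size big_cons.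
  by rewrite /gram_form /ghost_free_form !big_nil subr0 => _; apply: nonneg0.
have [[x0 [e [q0 [hx0 hq0]]]]|ghost_free] :=
  pselect (exists x e q, List.In x F /\ mghost x = e :: q); last first.
  apply: nonneg_gram_form_ghost_free (HP hJ hJv) _ => x hx; have [wfx wx] := hF x hx.
  by split=> //; case hq: (mghost x) => [|e q] //; case: ghost_free; exists x, e, q.
have [[_ cq0 _] wx0] := hF x0 hx0.
have se : gsrc e = v by move: cq0; rewrite hq0 wx0 => -[].
rewrite (gram_form_split t _ e (v := v)) => [|x hx]; last by case: (hF x hx).
apply: nonnegD.
  have := IH (pmap (descend e) F) (grng e) [::].
  rewrite big_nil ghost_free_form0 subr0; apply.
  - by rewrite -ltnS; apply: leq_trans (ghost_size_descend_lt hx0 hq0) hn.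
  - move=> y hy; have [x hx hxy] := List_In_pmap hy; have [wfx wx] := hF x hx.
    by apply: wf_descend wfx _ hxy; rewrite se wx.
  - exact: List.NoDup_nil.
  - by move=> ? [].
  - by move=> ? ? ? _ _ [].
have -> : vtrace (grng e) + \sum_(f <- J) vtrace (grng f) = \sum_(f <- e :: J) vtrace (grng f).
  by rewrite big_cons.
apply: IH.
- by rewrite -ltnS; apply: leq_trans (ghost_size_keep_lt hx0 hq0) hn.
- by move=> y hy; have [x hx /keep_Some [-> _]] := List_In_pmap hy; apply: hF.
- by constructor; [apply: hFJ hx0 hq0 |].
- by move=> f [<-|/hJv].
move=> y f q hy; have [x hx /keep_Some [-> nx]] := List_In_pmap hy.
move=> hq [fe|]; last exact: hFJ hx hq.
by apply: (nx q); rewrite hq fe.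
Qed.

Lemma nonneg_gram_form (F : seq monomial) : wf_monomials F -> nonneg (gram_form F).
Proof.
elim: {F}_.+1 {-2}F (ltnSn (size F)) => // n IH [|x0 F] hs hF.
  by rewrite /gram_form big_nil; apply: nonneg0.
pose at_dst (x : monomial) := if `[< mdst x = mdst x0 >] then Some x else None.
pose off_dst (x : monomial) := if `[< mdst x = mdst x0 >] then None else Some x.
have -> : gram_form (x0 :: F) =
    gram_form (pmap at_dst (x0 :: F)) + gram_form (pmap off_dst (x0 :: F)).
  rewrite /gram_form !big_pmap2 -big_split; apply: eq_bigr => x _; rewrite -big_split.
  apply: eq_bigr => y _; rewrite /at_dst /off_dst.
  case: asboolP => hx; case: asboolP => hy /=; rewrite ?addr0 ?add0r //.
    by rewrite /gram_entry gram_dst_neq ?scaler0 // => e; apply: hy; rewrite -e.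
  by rewrite /gram_entry gram_dst_neq ?scaler0 // => e; apply: hx; rewrite e.
apply: nonnegD.
  have := @nonneg_gram_form_descent _ (pmap at_dst (x0 :: F)) (mdst x0) [::] (leqnn _).
  rewrite big_nil ghost_free_form0 subr0; apply.
  - move=> y hy; have [x hx] := List_In_pmap hy.
    by rewrite /at_dst; case: asboolP => // ex [<-]; split=> //; apply: hF.
  - exact: List.NoDup_nil.
  - by move=> ? [].
  - by move=> ? ? ? _ _ [].
apply: IH => [|y hy]; last first.
  have [x hx] := List_In_pmap hy.
  by rewrite /off_dst; case: asboolP => // _ [<-]; apply: hF.
rewrite -ltnS; apply: leq_trans hs; rewrite /= /off_dst asboolT //= !ltnS.
exact: size_pmap_le.
Qed.

End Positivity.

Section PositiveTraces.
Variables (K : fieldType) (E : graph) (ks : K -> K) (R : invAlg ks) (t : lterm K E -> R).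
Hypotheses (Hks : field_involution ks) (Htr : is_trace t) (Hlin : is_Klinear t)
  (Hcan : is_canonical t).
Local Notation vtrace := (vtrace t).
Local Notation gram := (gram t).

Lemma trace_condP_term v (I : seq (edge E)) :
  t (LAdd (LV K v) (LScale (-1) (lsum [seq LV K (grng e) | e <- I]))) =
    vtrace v - \sum_(e <- I) vtrace (grng e).
Proof. by rewrite (traceD Htr) Hlin (trace_lsum Htr) big_map scaleN1r. Qed.

Lemma positive_of_condP : condP t -> is_positive t.
Proof.
move=> hC x [zs hx]; rewrite (trace_leqv Htr hx) (trace_lsum Htr) big_map.
apply: nonneg_sum => z _; have [F hF eF] := normal_form z.
rewrite (trace_leqv Htr (leqv_mul eF (leqv_lstar Hks eF))) (trace_norm_msum Hks Htr Hlin Hcan hF).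
apply: (nonneg_gram_form Hks) hF => v J hJ hJv.
by rewrite -trace_condP_term; apply: hC.
Qed.

Lemma condP_of_positive : is_positive t -> condP t.
Proof.
move=> hpos v I hI hs.
pose z := LAdd (LV K v) (LScale (-1) (lsum [seq LMul (LE K e) (LG K e) | e <- I])).
pose x0 : monomial K E := Monomial 1 v [::] v [::].
pose loop e : monomial K E := Monomial (-1) v [:: e] v [:: e].
have hF : wf_monomials (x0 :: map loop I).
  by move=> m [<-|/List.in_map_iff [e [<- he]]] //; split=> //=; rewrite (hs e he).
have ez : leqv z (msum (x0 :: map loop I)).
  rewrite /z /msum /= /mterm /= ax_scale1 rel_V1 lscale_sum -!map_comp.
  by apply: leqv_add => //; apply: eq_lsum_map => e _ /=; rewrite rel_E1r rel_E2r.
have g00 : gram x0 x0 = vtrace v by rewrite gram_ghost_free //= asboolT.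
have g0e e : gram x0 (loop e) = vtrace (grng e).
  by rewrite (gram_ghost_extends t (s := [:: e])) //= asboolT.
have gee e f : gram (loop e) (loop f) = if `[< e = f >] then vtrace (grng e) else 0.
  case: asboolP => [<-|ne]; first by rewrite (gram_ghost_extends t (s := [::])) //= asboolT.
  by rewrite gram_ghost_incomparable //= => s [fe _]; apply: ne; rewrite fe.
suff <- : t (LMul z (lstar ks z)) =
    t (LAdd (LV K v) (LScale (-1) (lsum [seq LV K (grng e) | e <- I]))).
  by apply: hpos; exists [:: z]; symmetry; apply: ax_add0.
rewrite (trace_leqv Htr (leqv_mul ez (leqv_lstar Hks ez))) (trace_norm_msum Hks Htr Hlin Hcan hF).
rewrite trace_condP_term /gram_form !big_cons big_map /gram_entry /= g00 (ks1 Hks) mulr1 scale1r.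
have row0 : \sum_(e <- I) (1 * ks (-1)) *: gram x0 (loop e) = - \sum_(e <- I) vtrace (grng e).
  by rewrite -sumrN; apply: eq_bigr => e _; rewrite g0e (ksN Hks) (ks1 Hks) mul1r scaleN1r.
have rows : \sum_(e <- I) \sum_(y <- x0 :: map loop I)
    (mcoef (loop e) * ks (mcoef y)) *: gram (loop e) y = 0.
  rewrite (eq_big_List_In (g := fun=> 0)) ?big1 // => e he.
  rewrite big_cons big_map /= gramC g0e (ks1 Hks) mulr1 scaleN1r.
  rewrite (eq_bigr (fun f => if `[< e = f >] then vtrace (grng e) else 0)).
    by rewrite sum_delta // addNr.
  by move=> f _; rewrite gee /= (ksN Hks) (ks1 Hks) mulrNN mulr1 scale1r.
by rewrite big_map row0 rows addr0.
Qed.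

End PositiveTraces.

Theorem theorem3p4 (K : fieldType) (ks : K -> K) (Hks : field_involution ks)
  (E : graph) (R : invAlg ks) (t : lterm K E -> R) :
  is_trace t -> is_Klinear t -> is_canonical t ->
  (is_positive t <-> condP t).
Proof.
move=> Htr Hlin Hcan.
by split; [apply: condP_of_positive | apply: positive_of_condP].
Qed.
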